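(* Let $T$ be an invertible operator in $\mathcal D(\mathcal P_n)$. Then $$K_h(T)=\varrho[T\phi_n]=d_h\bigl(Z(\phi_n),Z(T\phi_n)\bigr).$$
   Context: Let $n\ge 1$ be an integer and $\mathcal P_n$ the complex vector space of polynomials in one complex variable of degree at most $n$; $\phi_k(z)=z^k/k!$. $D$ is differentiation on $\mathcal P_n$, $I$ the identity, and $\mathcal D(\mathcal P_n)$ the linear span of $I,D,\dots,D^n$. For a nonzero $f$, $Z(f)$ is the multiset of roots of $f$ (with multiplicity; empty for nonzero constants); $Z(0)=\mathbb C$. For nonconstant $f$, the root radius is $\varrho[f]=\max\{|u|:u\in Z(f)\}$. For finite nonempty $A,B\subset\mathbb C$, $d_h(A,B)=\max_{y\in B}\min_{x\in A}|x-y|$, with conventions $d_h(\emptyset,\emptyset)=0$, $d_h(A,\emptyset)=d_h(\emptyset,A)=+\infty$ for $A\ne\emptyset$, and $d_h(A,B)=0$ if one of $A,B$ equals $\mathbb C$ and the other is nonempty. $K_h(T)=\sup_{f\in\mathcal P_n}d_h(Z(f),Z(Tf))$. *)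

From HB Require Import structures.
From mathcomp Require Import all_boot all_order all_algebra.
From mathcomp Require Import complex.
From mathcomp Require Import boolp classical_sets reals ereal.
Set Implicit Arguments. Unset Strict Implicit. Unset Printing Implicit Defensive.
Import Order.TTheory GRing.Theory Num.Theory.
Local Open Scope ring_scope.
Local Open Scope classical_set_scope.

Section Defs.
Variable R : realType.
Local Notation C := R[i].

Definition cnorm (z : C) : R := Normc.normc z.

Definition Pn (n : nat) : set {poly C} := [set f | (size f <= n.+1)%N].

Definition phi (k : nat) : {poly C} := (k`!%:R)^-1 *: 'X^k.

Definition diffop (n : nat) (a : 'I_n.+1 -> C) (f : {poly C}) : {poly C} :=
  \sum_(k < n.+1) a k *: f^`(k).

Definition invertible_on (n : nat) (T : {poly C} -> {poly C}) : Prop :=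
  (forall f, Pn n f -> Pn n (T f)) /\
  (forall f g, Pn n f -> Pn n g -> T f = T g -> f = g) /\
  (forall g, Pn n g -> exists2 f, Pn n f & T f = g).

(* Z(f): the set of roots of f (multiplicities irrelevant for d_h); Z(0) = C *)
Definition Z (f : {poly C}) : set C :=
  if f == 0 then setT else [set x | root f x].

Definition d_h (A B : set C) : \bar R :=
  if `[< A = set0 >] then (if `[< B = set0 >] then 0%E else +oo%E)
  else if `[< B = set0 >] then +oo%E
  else if `[< A = setT \/ B = setT >] then 0%E
  else ereal_sup [set ereal_inf [set (cnorm (x - y))%:E | x in A] | y in B].

Definition K_h (n : nat) (T : {poly C} -> {poly C}) : \bar R :=
  ereal_sup [set d_h (Z f) (Z (T f)) | f in Pn n].

(* root radius rho[f] = max { |u| : u in Z(f) } (used for nonconstant f) *)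
Definition rho (f : {poly C}) : R := sup [set cnorm u | u in Z f].

End Defs.

(* Put q := T phi_n and B(q, g) := sum_k (n - k)! k! q_(n-k) g_k, the apolar form.
   Expanding f(X + y) in Taylor coefficients gives B(q, f(X + y)) = (T f)(y).
   A Grace-type theorem says that B(q, g) <> 0 when the roots of q lie in the
   closed disc of radius rho[q] and those of g <> 0 (of degree <= n) lie outside
   it. It goes by induction on n: splitting off a root z of q turns g into its
   polar derivative n g - (X + z) g', and Laguerre's theorem keeps the roots of
   the polar derivative outside the disc. Hence every root y of T f is within
   rho[q] of a root of f, i.e. K_h(T) <= rho[q], and f = phi_n, whose only root
   is 0, attains the bound. *)

From HB Require Import structures.
From mathcomp Require Import all_boot all_order all_algebra.
From mathcomp Require Import complex.
From mathcomp Require Import boolp classical_sets reals ereal.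
From mathcomp Require Import ring lra.
Import Order.TTheory GRing.Theory Num.Theory.
Local Open Scope ring_scope.

Set Implicit Arguments.
Unset Strict Implicit.
Unset Printing Implicit Defensive.

Section SumSquares.
Variable R : realDomainType.

Lemma sqr_sum_le (s : seq R) :
  (\sum_(x <- s) x) ^+ 2 <= (size s)%:R * \sum_(x <- s) x ^+ 2.
Proof.
elim: s => [|x s IH]; first by rewrite !big_nil expr0n mul0r.
rewrite !big_cons /= -natr1.
set A := \sum_(y <- s) y in IH *; set Q := \sum_(y <- s) y ^+ 2 in IH *.
set m := (size s)%:R in IH *.
have Q0 : 0 <= Q by rewrite sumr_ge0 // => y _; exact: sqr_ge0.
suff cross : 2 * x * A <= m * x ^+ 2 + Q by nra.
have [m0|m_gt0] := eqVneq m 0.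
  have A0 : A = 0 by apply/eqP; rewrite -sqrf_eq0 eq_le sqr_ge0 andbT -(mul0r Q) -m0.
  by rewrite A0 m0; nra.
have {m_gt0}m_gt0 : 0 < m by rewrite lt_def m_gt0 ler0n.
rewrite -(ler_pM2l m_gt0); have := sqr_ge0 (m * x - A); nra.
Qed.

End SumSquares.

Section SquaredModulus.
Variable R : rcfType.
Local Notation C := R[i].
Local Notation normc := (@Normc.normc R).
Local Notation Re := (@complex.Re R).
Local Notation Im := (@complex.Im R).
Implicit Types (z w : C) (r : R).

Definition sqnormc z : R := Re z ^+ 2 + Im z ^+ 2.

Lemma sqnormc_ge0 z : 0 <= sqnormc z.
Proof. by rewrite addr_ge0 ?sqr_ge0. Qed.

Lemma normc_sqrt z : normc z = Num.sqrt (sqnormc z).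
Proof. by case: z. Qed.

Lemma normc_ge0 z : 0 <= normc z.
Proof. by rewrite normc_sqrt sqrtr_ge0. Qed.

Lemma sqnormcM z w : sqnormc (z * w) = sqnormc z * sqnormc w.
Proof. by case: z w => a b [c d]; rewrite /sqnormc /=; ring. Qed.

Lemma sqnormc_eq0 z : (sqnormc z == 0) = (z == 0).
Proof.
case: z => a b; rewrite /sqnormc eq_complex /=.
apply/eqP/andP => [h|[/eqP-> /eqP->]]; last by rewrite expr0n /= addr0.
by split; apply/eqP; nra.
Qed.

Lemma normc_le z r : 0 <= r -> (normc z <= r) = (sqnormc z <= r ^+ 2).
Proof.
move=> r0; rewrite normc_sqrt -(ler_pXn2r (_ : 0 < 2)%N) ?nnegrE ?sqrtr_ge0 //.
by rewrite sqr_sqrtr // sqnormc_ge0.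
Qed.

Lemma normc_gt z r : 0 <= r -> (r < normc z) = (r ^+ 2 < sqnormc z).
Proof. by move=> r0; rewrite !ltNge normc_le. Qed.

Lemma sqnormcB_real z r : sqnormc (z - r%:C)%C = sqnormc z - 2 * r * Re z + r ^+ 2.
Proof. by case: z => a b; rewrite /sqnormc /=; ring. Qed.

Lemma ReD z w : Re (z + w) = Re z + Re w. Proof. by case: z w => ? ? []. Qed.
Lemma ImD z w : Im (z + w) = Im z + Im w. Proof. by case: z w => ? ? []. Qed.

Lemma sqnormc_sum_le (ws : seq C) :
  sqnormc (\sum_(w <- ws) w) <= (size ws)%:R * \sum_(w <- ws) sqnormc w.
Proof.
rewrite /sqnormc (big_morph _ ReD (erefl : Re 0 = 0)) (big_morph _ ImD (erefl : Im 0 = 0)).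
have := sqr_sum_le [seq Re w | w <- ws]; have := sqr_sum_le [seq Im w | w <- ws].
rewrite !big_map !size_map big_split mulrDr => hIm hRe; exact: lerD.
Qed.

End SquaredModulus.

Section ApolarForm.
Variable F : comNzRingType.
Implicit Types (q g : {poly F}) (z : F).

Definition polar_deriv (N : nat) z g : {poly F} := N%:R *: g - ('X - z%:P) * g^`().

Definition apolar (n : nat) q g : F :=
  \sum_(k < n.+1) ((n - k)`! * k`!)%:R * (q`_(n - k) * g`_k).

Lemma coef_polar_deriv N z g k :
  (polar_deriv N z g)`_k = (N%:R - k%:R) * g`_k + z * g`_k.+1 *+ k.+1.
Proof.
have coefXD : ('X * g^`())`_k = g`_k *+ k.
  by rewrite coefXM; case: k => //= k; rewrite coef_deriv.
rewrite coefB coefZ mulrBl coefB coefXD coefCM coef_deriv.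
by rewrite mulrBl mulr_natl mulrnAr opprB addrA addrAC.
Qed.

Lemma size_polar_deriv N z g : (size g <= N.+1)%N -> (size (polar_deriv N z g) <= N)%N.
Proof.
move=> /leq_sizeP g_hi; apply/leq_sizeP => k k_ge.
rewrite coef_polar_deriv (g_hi k.+1) // mulr0 mul0rn addr0.
have [->|k_ne] := eqVneq k N; first by rewrite subrr mul0r.
by rewrite g_hi ?mulr0 // ltn_neqAle eq_sym k_ne k_ge.
Qed.

(* Since [(q * ('X - z%:P))`_j = q`_j.-1 - z * q`_j], shifting the index of the
   first part of the sum turns the weights into those of [polar_deriv]. *)
Lemma apolar_mulXsubC n q g z : (size q <= n.+1)%N ->
  apolar n.+1 (q * ('X - z%:P)) g = apolar n q (polar_deriv n.+1 (- z) g).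
Proof.
move=> size_q.
have q_hi : q`_n.+1 = 0 by apply/(leq_sizeP _ _ size_q).
rewrite /apolar.
have expandL (k : 'I_n.+2) :
   ((n.+1 - k)`! * k`!)%:R * ((q * ('X - z%:P))`_(n.+1 - k) * g`_k) =
   ((n.+1 - k)`! * k`!)%:R * ((if (n.+1 - k == 0)%N then 0 else q`_(n.+1 - k).-1) * g`_k)
   - z * (((n.+1 - k)`! * k`!)%:R * (q`_(n.+1 - k) * g`_k)).
  rewrite mulrBr coefB coefMX coefMC.
  by move: (if _ then _ else _) (_ %:R) => a c; ring.
rewrite (eq_bigr _ (fun k _ => expandL k)) sumrB -mulr_sumr.
rewrite big_ord_recr /= subnn eqxx mul0r mulr0 addr0.
rewrite [X in _ - z * X]big_ord_recl /= subn0 q_hi mul0r mulr0 add0r.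
have expandR (k : 'I_n.+1) :
  ((n - k)`! * k`!)%:R * (q`_(n - k) * (polar_deriv n.+1 (- z) g)`_k) =
  ((n.+1 - k)`! * k`!)%:R * ((if (n.+1 - k == 0)%N then 0 else q`_(n.+1 - k).-1) * g`_k)
  - z * (((n.+1 - bump 0 k)`! * (bump 0 k)`!)%:R * (q`_(n.+1 - bump 0 k) * g`_(bump 0 k))).
  have n_k : (n.+1 - k = (n - k).+1)%N by rewrite subSn // -ltnS.
  have n_k' : n.+1%:R - k%:R = (n - k).+1%:R :> F by rewrite -n_k natrB // ltnW.
  by rewrite /bump add1n subSS coef_polar_deriv n_k' n_k /= !factS !natrM; ring.
by rewrite (eq_bigr _ (fun k _ => expandR k)) sumrB -mulr_sumr.
Qed.

End ApolarForm.

Lemma deriv_prod_XsubC (F : fieldType) (rs : seq F) (s : F) : s \notin rs ->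
  (\prod_(z <- rs) ('X - z%:P))^`().[s] =
  (\prod_(z <- rs) ('X - z%:P)).[s] * \sum_(z <- rs) (s - z)^-1.
Proof.
elim: rs => [|z rs IH]; first by rewrite !big_nil derivC !hornerC mulr0.
rewrite in_cons negb_or => /andP[sz srs].
rewrite !big_cons derivM derivXsubC mul1r !hornerE IH //.
by field; rewrite subr_eq0.
Qed.

Section PolarDerivative.
Variable R : rcfType.
Local Notation C := R[i].
Local Notation normc := (@Normc.normc R).
Local Notation Re := (@complex.Re R).

(* For [w = (s - u)^-1] this describes the image of the exterior of the disc
   of radius [rho] under [u |-> (s - u)^-1]. *)
Lemma inv_sub_ineq (s u w : C) (rho : R) :
  w * (s - u) = 1 -> rho ^+ 2 < sqnormc u ->
  (rho ^+ 2 - sqnormc s) * sqnormc w + 2 * Re (s * w) < 1.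
Proof.
move=> hw hu.
have w0 : w != 0 by apply: contra_eqN hw => /eqP->; rewrite mul0r eq_sym oner_eq0.
have w_gt0 : 0 < sqnormc w by rewrite lt_def sqnormc_eq0 w0 sqnormc_ge0.
have uw : u * w = s * w - (1%:C)%C by rewrite (_ : (1%:C)%C = 1) // -hw; ring.
have : sqnormc u * sqnormc w = sqnormc s * sqnormc w - 2 * Re (s * w) + 1.
  by rewrite -sqnormcM uw sqnormcB_real sqnormcM expr1n mulr1.
have : rho ^+ 2 * sqnormc w < sqnormc u * sqnormc w by rewrite ltr_pM2r.
nra.
Qed.

Lemma sum_inv_sub_lt (us : seq C) (s : C) (rho : R) : us != [::] ->
  (forall u, u \in us -> rho < normc u) -> normc s <= rho ->
  (rho ^+ 2 - sqnormc s) * \sum_(u <- us) sqnormc (s - u)^-1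
    + 2 * Re (s * \sum_(u <- us) (s - u)^-1) < (size us)%:R.
Proof.
move=> us_ne us_out s_in; have rho0 : 0 <= rho := le_trans (normc_ge0 s) s_in.
rewrite !mulr_sumr (big_morph _ (@ReD R) (erefl : Re 0 = 0)) mulr_sumr -big_split.
rewrite -sum1_size natr_sum big_seq [X in _ < X]big_seq /=.
apply: ltr_sum => [|u u_us]; first by case: (us) us_ne => // u ? _; rewrite /= mem_head.
have u_out := us_out u u_us.
apply: (inv_sub_ineq (u := u)); last by rewrite -normc_gt.
by rewrite mulVf // subr_eq0; apply: contraTneq u_out => <-; rewrite -leNgt.
Qed.

(* Laguerre's argument: averaging [inv_sub_ineq] over the [u] (the average is
   controlled by Cauchy-Schwarz) shows that [(s - p) * sum = N] would force [p]
   out of the disc. *)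
Lemma sum_inv_sub_neq (us : seq C) (N : nat) (s p : C) (rho : R) :
  (0 < N)%N -> (size us <= N)%N -> (forall u, u \in us -> rho < normc u) ->
  normc p <= rho -> normc s <= rho ->
  (s - p) * \sum_(u <- us) (s - u)^-1 != N%:R.
Proof.
move=> N_gt0 us_le us_out p_in s_in; apply/eqP => hS.
have rho0 : 0 <= rho := le_trans (normc_ge0 s) s_in.
have [us0|us_ne] := eqVneq us [::].
  by move/eqP: hS; rewrite us0 big_nil mulr0 eq_sym pnatr_eq0 eqn0Ngt N_gt0.
have sum_lt := sum_inv_sub_lt us_ne us_out s_in.
have cs := sqnormc_sum_le [seq (s - u)^-1 | u <- us]; rewrite !big_map size_map in cs.
set S := \sum_(u <- us) (s - u)^-1 in hS sum_lt cs.
set Q := \sum_(u <- us) sqnormc (s - u)^-1 in sum_lt cs.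
have Q0 : 0 <= Q by rewrite sumr_ge0 // => *; exact: sqnormc_ge0.
have al0 : 0 <= rho ^+ 2 - sqnormc s by rewrite subr_ge0 -normc_le.
have pS : p * S = s * S - ((N%:R : R)%:C)%C by rewrite rmorph_nat -hS; ring.
have : sqnormc (p * S) <= rho ^+ 2 * sqnormc S.
  by rewrite sqnormcM ler_wpM2r ?sqnormc_ge0 // -normc_le.
rewrite pS sqnormcB_real sqnormcM => pS_le.
have m_le : (size us)%:R <= N%:R :> R by rewrite ler_nat.
have N_gt0' : 0 < N%:R :> R by rewrite ltr0n.
set al := rho ^+ 2 - sqnormc s in al0 sum_lt pS_le.
set m := (size us)%:R in sum_lt cs m_le.
set M := N%:R in m_le N_gt0' pS_le.
have h2 : al * sqnormc S <= al * (m * Q) by rewrite ler_wpM2l.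
have h3 : al * (m * Q) <= al * (M * Q) by rewrite ler_wpM2l // ler_wpM2r.
have h4 : M * (al * Q + 2 * Re (s * S)) < M * m by rewrite ltr_pM2l.
have h5 : M * m <= M * M by rewrite ler_wpM2l // ltW.
by rewrite /al in h2 h3 h4; nra.
Qed.

Lemma polar_deriv_neq0 (N : nat) (g : {poly C}) (p s : C) (rho : R) :
  (0 < N)%N -> g != 0 -> (size g <= N.+1)%N ->
  (forall u, root g u -> rho < normc u) -> normc p <= rho -> normc s <= rho ->
  (polar_deriv N p g).[s] != 0.
Proof.
move=> N_gt0 g0 size_g g_out p_in s_in.
have [us g_us] := closed_field_poly_normal g.
set P := \prod_(u <- us) ('X - u%:P) in g_us.
have c0 : lead_coef g != 0 by rewrite lead_coef_eq0.
have root_g u : root g u = (u \in us) by rewrite g_us rootZ // root_prod_XsubC.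
have s_us : s \notin us.
  by rewrite -root_g; apply/negP => /g_out; rewrite ltNge s_in.
have Ps0 : P.[s] != 0.
  rewrite horner_prod prodf_seq_neq0; apply/allP => u u_us /=.
  by rewrite hornerXsubC subr_eq0; apply: contraNneq s_us => ->.
have size_us : (size us <= N)%N.
  by move: size_g; rewrite g_us size_scale // size_prod_XsubC.
rewrite /polar_deriv g_us derivZ -scalerAr !hornerE deriv_prod_XsubC // -/P.
set W := \sum_(u <- us) (s - u)^-1.
have -> : N%:R * lead_coef g * P.[s] - lead_coef g * (s - p) * (P.[s] * W) =
          (lead_coef g * P.[s]) * (N%:R - (s - p) * W) by ring.
rewrite mulf_neq0 ?mulf_neq0 // subr_eq0 eq_sym.
by apply: (sum_inv_sub_neq (rho := rho)) => // u; rewrite -root_g; exact: g_out.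
Qed.

Lemma apolar_neq0 n (q g : {poly C}) (rho : R) :
  size q = n.+1 -> (forall z, root q z -> normc z <= rho) ->
  g != 0 -> (size g <= n.+1)%N -> (forall u, root g u -> rho < normc u) ->
  apolar n q g != 0.
Proof.
elim: n q g => [|n IH] q g size_q q_in g0 size_g g_out.
  have q0 : q`_0 != 0.
    by have := lead_coef_eq0 q; rewrite lead_coefE size_q -size_poly_eq0 size_q => ->.
  have g00 : g`_0 != 0.
    by apply: contra_neq g0 => g0_0; rewrite (size1_polyC size_g) g0_0.
  by rewrite /apolar big_ord1 /= mul1r mulf_neq0.
have [z qz] : exists z, root q z by apply/closed_rootP; rewrite size_q.
have [q1 q_q1] := factor_theorem _ _ qz.
have size_q1 : size q1 = n.+1.
  have q10 : q1 != 0 by apply: contra_eq_neq q_q1 => ->; rewrite mul0r -size_poly_eq0 size_q.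
  by move: size_q; rewrite q_q1 size_mul ?polyXsubC_eq0 // size_XsubC addn2 => -[].
have rho0 : 0 <= rho := le_trans (normc_ge0 z) (q_in z qz).
have h_in s : normc s <= rho -> (polar_deriv n.+1 (- z) g).[s] != 0.
  by apply: polar_deriv_neq0 => //; rewrite normcN; exact: q_in.
rewrite q_q1 apolar_mulXsubC ?size_q1 //; apply: IH => //.
- by move=> u q1u; apply: q_in; rewrite q_q1 rootM q1u.
- by apply: contra_neq (h_in 0 _) => [->|]; rewrite ?horner0 ?Normc.normc0.
- exact: size_polar_deriv.
- by move=> u hu; rewrite ltNge; apply: contraL hu => /h_in.
Qed.

End PolarDerivative.

Lemma natr_fact_neq0 (D : numDomainType) m : m`!%:R != 0 :> D.
Proof. by rewrite pnatr_eq0 -lt0n fact_gt0. Qed.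

Section TaylorShift.
Variable F : comNzRingType.
Implicit Types (f : {poly F}) (y : F).

Lemma derivn_comp_XaddC f y k :
  (f \Po ('X + y%:P))^`(k) = f^`(k) \Po ('X + y%:P).
Proof.
elim: k => [|k IH]; first by rewrite !derivn0.
by rewrite !derivnS IH deriv_comp derivD derivX derivC addr0 mulr1.
Qed.

Lemma coef_comp_XaddC f y k :
  (f \Po ('X + y%:P))`_k * k`!%:R = (f^`(k)).[y].
Proof.
have := horner_coef0 ((f \Po ('X + y%:P))^`(k)).
rewrite derivn_comp_XaddC horner_comp !hornerE => ->.
by rewrite -derivn_comp_XaddC coef_derivn addn0 ffactnn mulr_natr.
Qed.

End TaylorShift.

Section DiffOp.
Variable R : realType.
Local Notation C := R[i].
Variables (n : nat) (a : 'I_n.+1 -> C).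

Lemma diffop0 : diffop a 0 = 0.
Proof. by rewrite /diffop big1 // => k _; rewrite derivn_poly0 ?size_poly0 // scaler0. Qed.

Lemma diffopC c : diffop a c%:P = (a ord0 * c)%:P.
Proof.
rewrite /diffop big_ord_recl big1 => [|k _]; last by rewrite derivnC /= scaler0.
by rewrite derivnC /= addr0 -mul_polyC polyCM.
Qed.

Lemma horner_diffop f y : (diffop a f).[y] = \sum_(k < n.+1) a k * (f^`(k)).[y].
Proof. by rewrite /diffop horner_sum; apply: eq_bigr => k _; rewrite hornerZ. Qed.

Lemma coef_diffop_phi j : (diffop a (phi R n))`_j =
  \sum_(k < n.+1) a k * (n`!%:R^-1 * (n ^_ k)%:R) * (j == (n - k)%N)%:R.
Proof.
rewrite /diffop coef_sum; apply: eq_bigr => k _.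
by rewrite /phi derivnZ derivnXn !coefZ coefMn coefXn -mulr_natr; ring.
Qed.

Lemma coef_diffop_phi_subn (k : 'I_n.+1) :
  (diffop a (phi R n))`_(n - k) = a k * (n`!%:R^-1 * (n ^_ k)%:R).
Proof.
rewrite coef_diffop_phi (bigD1 k) //= eqxx mulr1 big1 ?addr0 // => i ik.
suff /negPf-> : (n - k != n - i)%N by rewrite mulr0.
apply: contra ik => /eqP nk_ni; apply/eqP/val_inj.
by rewrite /= -(subKn (ltnSE (ltn_ord k))) -(subKn (ltnSE (ltn_ord i))) nk_ni.
Qed.

Lemma size_diffop_phi : a ord0 != 0 -> size (diffop a (phi R n)) = n.+1.
Proof.
move=> a0; apply/eqP; rewrite eqn_leq; apply/andP; split.
  apply/leq_sizeP => j j_gt; rewrite coef_diffop_phi big1 // => k _.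
  suff /negPf-> : (j != n - k)%N by rewrite mulr0.
  by rewrite neq_ltn (leq_ltn_trans (leq_subr _ _) j_gt) orbT.
rewrite ltnNge; apply/negP => /leq_sizeP /(_ n (leqnn n)).
rewrite -[n in _`_n]subn0 (coef_diffop_phi_subn ord0) ffactn0.
by apply/eqP; rewrite mulr1 mulf_neq0 ?invr_eq0 ?natr_fact_neq0.
Qed.

Lemma apolar_diffop_phi f y :
  apolar n (diffop a (phi R n)) (f \Po ('X + y%:P)) = (diffop a f).[y].
Proof.
rewrite /apolar horner_diffop; apply: eq_bigr => k _.
rewrite coef_diffop_phi_subn -coef_comp_XaddC.
have fact_split : (n ^_ k)%:R * (n - k)`!%:R = n`!%:R :> C.
  by rewrite -natrM ffact_fact // -ltnS ltn_ord.
have : (n ^_ k)%:R * (n - k)`!%:R != 0 :> C by rewrite fact_split natr_fact_neq0.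
rewrite mulf_eq0 negb_or natrM -fact_split => /andP[nk0 fnk0].
by field; rewrite nk0 fnk0.
Qed.

End DiffOp.

Section RootSets.
Local Open Scope classical_set_scope.
Variable R : realType.
Local Notation C := R[i].
Implicit Types (p : {poly C}) (A B : set C).

Lemma ZE p : p != 0 -> Z p = [set x | root p x].
Proof. by move=> p0; rewrite /Z (negbTE p0). Qed.

Lemma Z_eq_set0 p : Z p = set0 <-> size p = 1%N.
Proof.
rewrite /Z; have [->|p0] := eqVneq p 0.
  by rewrite size_poly0; split => // /seteqP[/(_ 0 I)].
split => [Zp0|/eqP/size_poly1P[c c0 ->]].
  apply/eqP; apply: contraT => /closed_rootP [x px].
  by have : [set x | root p x] x by []; rewrite Zp0.
by apply/seteqP; split => x //=; rewrite rootC (negbTE c0).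
Qed.

Lemma roots_bounded p : p != 0 -> exists M, forall u, root p u -> cnorm u <= M.
Proof.
move=> p0; have [rs p_rs] := closed_field_poly_normal p.
exists (\sum_(u <- rs) cnorm u) => u pu.
have : u \in rs by move: pu; rewrite p_rs rootZ ?lead_coef_eq0 // root_prod_XsubC.
elim: rs {p_rs} => [//|v rs IH]; rewrite in_cons big_cons => /orP[/eqP<-|u_rs].
  by rewrite lerDl sumr_ge0 // => w _; exact: normc_ge0.
by rewrite ler_wpDl ?normc_ge0 // IH.
Qed.

Lemma roots_neqT p : p != 0 -> [set x | root p x] <> setT.
Proof.
move=> p0 pT; have [M HM] := roots_bounded p0.
set x := ((`|M| + 1)%:C)%C.
have px : root p x by change ([set x | root p x] x); rewrite pT.
have := HM x px; rewrite /cnorm normc_sqrt /sqnormc /= expr0n /= addr0.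
by rewrite sqrtr_sqr ger0_norm ?addr_ge0 //; have := ler_norm M; lra.
Qed.

Lemma d_h_le A B (r : R) :
  (A = set0 <-> B = set0) ->
  (forall y, B y -> exists2 x, A x & cnorm (x - y) <= r) -> 0 <= r ->
  (d_h A B <= r%:E)%E.
Proof.
move=> AB_empty B_near r0; rewrite /d_h.
have [A0|A0] := pselect (A = set0).
  by rewrite (asboolT A0) (asboolT (proj1 AB_empty A0)) lee_fin.
have B0 : B <> set0 by move=> /(proj2 AB_empty).
rewrite (asboolF A0) (asboolF B0).
have [ABT|ABT] := pselect (A = setT \/ B = setT); first by rewrite (asboolT ABT) lee_fin.
rewrite (asboolF ABT); apply: ge_ereal_sup => _ [y By <-].
have [x Ax xy] := B_near y By.
by apply: ge_ereal_inf; exists (cnorm (x - y))%:E; [exists x | rewrite lee_fin].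
Qed.

End RootSets.

Section InvertibleDiffOp.
Local Open Scope classical_set_scope.
Variable R : realType.
Local Notation C := R[i].
Variables (n : nat) (a : 'I_n.+1 -> C).
Hypothesis n_gt0 : (0 < n)%N.
Hypothesis T_inv : invertible_on n (diffop a).

Local Notation T := (diffop a).
Local Notation q := (diffop a (phi R n)).

Lemma Pn0 : Pn n (0 : {poly C}).
Proof. by rewrite /Pn /= size_poly0. Qed.

Lemma PnC (c : C) : Pn n c%:P.
Proof. exact: leq_trans (size_polyC_leq1 c) _. Qed.

Lemma Pn_phi : Pn n (phi R n).
Proof. by apply: leq_trans (size_scale_leq _ _) _; rewrite size_polyXn. Qed.

Lemma diffop_coef0_neq0 : a ord0 != 0.
Proof.
apply/eqP => a0; have [_ [T_inj _]] := T_inv.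
have : T 1 = T 0 by rewrite diffop0 -[1]/(1%:P) diffopC a0 mul0r.
by move/T_inj => /(_ (PnC 1) Pn0) /eqP; rewrite oner_eq0.
Qed.

Lemma diffop_neq0 f : Pn n f -> f != 0 -> T f != 0.
Proof.
move=> Pf; apply: contra_neq => Tf0; have [_ [T_inj _]] := T_inv.
by apply: T_inj => //; [exact: Pn0 | rewrite diffop0].
Qed.

Lemma size_diffop_eq1 f : Pn n f -> size f = 1%N <-> size (T f) = 1%N.
Proof.
move=> Pf; have a0 := diffop_coef0_neq0; split.
  by move/eqP/size_poly1P => [c c0 ->]; rewrite diffopC size_polyC mulf_neq0.
move/eqP/size_poly1P => [c c0 Tf_c]; have [_ [T_inj _]] := T_inv.
have : T (c / a ord0)%:P = T f by rewrite Tf_c diffopC mulrC divfK.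
by move/T_inj => /(_ (PnC _) Pf) <-; rewrite size_polyC mulf_neq0 ?invr_eq0.
Qed.

Lemma size_q : size q = n.+1.
Proof. exact: size_diffop_phi diffop_coef0_neq0. Qed.

Lemma q_neq0 : q != 0.
Proof. by rewrite -size_poly_eq0 size_q. Qed.

Lemma q_has_root : exists z, root q z.
Proof. by apply/closed_rootP; rewrite size_q eqSS -lt0n. Qed.

Lemma has_sup_root_norms : has_sup [set cnorm u | u in [set x | root q x]].
Proof.
split; first by have [z qz] := q_has_root; exists (cnorm z), z.
by have [M HM] := roots_bounded q_neq0; exists M => _ [u qu <-]; exact: HM.
Qed.

Lemma rhoE : rho q = sup [set cnorm u | u in [set x | root q x]].
Proof. by rewrite /rho ZE ?q_neq0. Qed.

Lemma root_le_rho z : root q z -> cnorm z <= rho q.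
Proof. by move=> qz; rewrite rhoE; apply: sup_upper_bound has_sup_root_norms _ _; exists z. Qed.

Lemma rho_ge0 : 0 <= rho q.
Proof. by have [z qz] := q_has_root; exact: le_trans (normc_ge0 z) (root_le_rho qz). Qed.

(* Grace's theorem applied to [q] and to the shift of [f] by [y]. *)
Lemma root_diffop_near f y : f != 0 -> Pn n f -> root (T f) y ->
  exists2 x, root f x & cnorm (x - y) <= rho q.
Proof.
move=> f0 Pf Tfy; apply: contrapT => far.
set g := f \Po ('X + y%:P).
have size_g : size g = size f by rewrite size_comp_poly2 // size_XaddC.
have g_out u : root g u -> rho q < cnorm u.
  move=> gu; rewrite ltNge; apply/negP => u_le; apply: far; exists (u + y).
    by move: gu; rewrite /g root_comp !hornerE.
  by rewrite /cnorm addrK.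
have g0 : g != 0 by rewrite -size_poly_eq0 size_g size_poly_eq0.
have g_le : (size g <= n.+1)%N by rewrite size_g.
have := apolar_neq0 size_q root_le_rho g0 g_le g_out.
by rewrite apolar_diffop_phi -/(root _ _) Tfy.
Qed.

Lemma d_h_diffop_le f : Pn n f -> (d_h (Z f) (Z (T f)) <= (rho q)%:E)%E.
Proof.
move=> Pf; apply: d_h_le rho_ge0; first by rewrite !Z_eq_set0; exact: size_diffop_eq1.
have [->|f0] := eqVneq f 0.
  by move=> y _; exists y; rewrite /Z ?eqxx // subrr /cnorm Normc.normc0 rho_ge0.
move=> y; rewrite ZE ?diffop_neq0 // => /(root_diffop_near f0 Pf) [x fx xy].
by exists x; rewrite ?ZE.
Qed.

Lemma Z_phi : Z (phi R n) = [set 0].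
Proof.
have fact0 : n`!%:R^-1 != 0 :> C by rewrite invr_eq0 natr_fact_neq0.
rewrite ZE; last by rewrite scaler_eq0 negb_or fact0 -size_poly_eq0 size_polyXn.
by apply/seteqP; split => x /=; rewrite /phi rootZ // /root hornerXn expf_eq0 n_gt0 => /eqP.
Qed.

Lemma d_h_phi : d_h (Z (phi R n)) (Z q) = (rho q)%:E.
Proof.
rewrite Z_phi ZE ?q_neq0 // /d_h.
have ne0 : [set 0 : C] <> set0 by move/seteqP => [/(_ 0 erefl)].
have ne1 : [set x | root q x] <> set0.
  by have [z qz] := q_has_root; move/seteqP => [/(_ z qz)].
have neT : ~ ([set 0 : C] = setT \/ [set x | root q x] = setT).
  by case=> [/seteqP[_ /(_ 1 I)] /eqP|]; [rewrite oner_eq0 | exact: roots_neqT q_neq0].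
rewrite (asboolF ne0) (asboolF ne1) (asboolF neT) rhoE.
rewrite -(ereal_sup_EFin (proj2 has_sup_root_norms) (proj1 has_sup_root_norms)).
congr ereal_sup; rewrite image_comp; apply: eq_imagel => y _.
by rewrite /= image_set1 ereal_inf1 sub0r /cnorm normcN.
Qed.

End InvertibleDiffOp.

Theorem mainTheorem4 (R : realType) (n : nat) (a : 'I_n.+1 -> R[i]) :
  (1 <= n)%N ->
  invertible_on n (diffop a) ->
  K_h n (diffop a) = (rho (diffop a (phi R n)))%:E /\
  (rho (diffop a (phi R n)))%:E = d_h (Z (phi R n)) (Z (diffop a (phi R n))).
Proof.
move=> n_gt0 T_inv; split; last by rewrite d_h_phi.
apply/eqP; rewrite eq_le; apply/andP; split.
  by apply: ge_ereal_sup => _ [f Pf <-]; exact: d_h_diffop_le.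
by rewrite -d_h_phi //; apply: ereal_sup_ubound; exists (phi R n); first exact: Pn_phi.
Qed.
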